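(* Let $G$ be a nested GVZ-group with $\operatorname{cd}(G)=\{p^{\delta_i}:0\le i\le n\}$, $0=\delta_0<\delta_1<\cdots<\delta_n$, for a prime $p$. Let $r\in\{1,\dots,n\}$ and $\chi,\psi\in\operatorname{Irr}_{p^{\delta_r}}(G)$. Then $\chi$ and $\psi$ are Galois conjugate over $\mathbb{Q}$ if and only if $\ker(\chi)=\ker(\psi)$.
   Context: $\operatorname{Irr}(G)$ is the set of irreducible complex characters, $\operatorname{Irr}_m(G)=\{\chi\in\operatorname{Irr}(G):\chi(1)=m\}$, $\operatorname{cd}(G)=\{\chi(1):\chi\in\operatorname{Irr}(G)\}$, $\ker(\chi)=\{g:\chi(g)=\chi(1)\}$, $Z(\chi)=\{g:|\chi(g)|=\chi(1)\}$. $G$ is a GVZ-group if every $\chi\in\operatorname{Irr}(G)$ vanishes on $G\setminus Z(\chi)$; nested if the $Z(\chi)$ are totally ordered by inclusion; a nested GVZ-group is both. $\chi,\psi$ are Galois conjugate over $\mathbb{Q}$ if $\mathbb{Q}(\chi)=\mathbb{Q}(\psi)$ and $\chi^\sigma=\psi$ for some $\sigma\in\operatorname{Gal}(\mathbb{Q}(\chi)/\mathbb{Q})$, where $\mathbb{Q}(\chi)$ is generated by the values of $\chi$. *)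

From mathcomp Require Import all_boot all_order all_algebra all_fingroup all_solvable all_field all_character.
Set Implicit Arguments. Unset Strict Implicit. Unset Printing Implicit Defensive.
Import GroupScope GRing.Theory Num.Theory.
Local Open Scope ring_scope.

Definition GVZ (gT : finGroupType) (G : {group gT}) : Prop :=
  forall (i : Iirr G) (x : gT),
    x \in G :\: ('Z('chi[G]_i))%CF -> 'chi[G]_i x = 0.

Definition nested (gT : finGroupType) (G : {group gT}) : Prop :=
  forall i j : Iirr G,
    (('Z('chi[G]_i))%CF \subset ('Z('chi[G]_j))%CF) \/
    (('Z('chi[G]_j))%CF \subset ('Z('chi[G]_i))%CF).

Definition in_Qchi (gT : finGroupType) (G : {group gT}) (chi : 'CF(G)) (a : algC)
  : Prop :=
  forall S : {pred algC}, divring_closed S -> (forall g : gT, chi g \in S) ->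
    a \in S.

(* chi and psi Galois conjugate over Q: Q(chi) = Q(psi) and chi^sigma = psi
   for some field automorphism sigma of Q(chi) (automatically fixing Q). *)
Definition galois_conj (gT : finGroupType) (G : {group gT}) (chi psi : 'CF(G))
  : Prop :=
  (forall a, in_Qchi chi a <-> in_Qchi psi a) /\
  exists sigma : algC -> algC,
    sigma 1 = 1 /\
    [/\ (forall a b, in_Qchi chi a -> in_Qchi chi b -> sigma (a + b) = sigma a + sigma b),
        (forall a b, in_Qchi chi a -> in_Qchi chi b -> sigma (a * b) = sigma a * sigma b),
        (forall a, in_Qchi chi a -> in_Qchi chi (sigma a)),
        (forall b, in_Qchi chi b -> exists2 a, in_Qchi chi a & sigma a = b)
      & (forall g : gT, sigma (chi g) = psi g)].

From HB Require Import structures.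
From mathcomp Require Import all_boot all_order all_algebra all_fingroup all_solvable all_field all_character.
Set Implicit Arguments. Unset Strict Implicit. Unset Printing Implicit Defensive.
Import GroupScope GRing.Theory Num.Theory.
Local Open Scope ring_scope.

(* In a GVZ-group an irreducible chi vanishes off Z(chi) and equals
   chi(1) * lam on Z(chi), for a linear character lam of Z(chi) with the same
   kernel as chi.  Equal kernels give equal centers, since
   Z(chi)/ker chi = Z(G/ker chi).  Two linear characters lam, mu of a group Z
   with the same kernel K are faithful on the cyclic group Z/K, so
   mu = lam^k with k prime to |Z/K|, and the cyclotomic automorphism
   z |-> z^k carries chi to psi; the same exponent shows that chi and psi take
   the same values up to 0, hence Q(chi) = Q(psi).  Conversely, a Galois
   conjugation is injective on Q(chi) and therefore preserves the kernel. *)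

Lemma rmorph_preim_divring_closed (F : fieldType) (R : unitRingType)
    (f : {rmorphism F -> R}) (S : divringClosed R) :
  divring_closed [pred a | f a \in S].
Proof.
split=> [|a b|a b]; rewrite !inE ?rmorph1 ?rmorphB ?fmorph_div ?rpred1 //;
  [exact: rpredB | exact: rpred_div].
Qed.

Lemma rmorph_fix_divring_closed (F : fieldType) (f : {rmorphism F -> F}) :
  divring_closed [pred a | f a == a].
Proof.
by split=> [|a b|a b]; rewrite !inE ?rmorph1 ?rmorphB ?fmorph_div // => /eqP-> /eqP->.
Qed.

Section FieldOfValues.
Variables (gT : finGroupType) (G : {group gT}).
Implicit Types (chi psi : 'CF(G)) (a b : algC).

Lemma in_QchiP chi a :
  in_Qchi chi a <->
  (forall S : divringClosed algC, (forall g, chi g \in S) -> a \in S).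
Proof.
split=> [Qa S | QSa S S_closed]; first exact: Qa (divringClosedP S).
exact: QSa (HB.pack_for (divringClosed algC) S
                        (GRing.isDivringClosed.Build algC S S_closed)).
Qed.

Lemma in_Qchi_cfun chi g : in_Qchi chi (chi g).
Proof. by move=> S _; apply. Qed.

Lemma in_QchiB chi a b : in_Qchi chi a -> in_Qchi chi b -> in_Qchi chi (a - b).
Proof.
by move=> /in_QchiP Qa /in_QchiP Qb; apply/in_QchiP => S S_chi; rewrite rpredB ?Qa ?Qb.
Qed.

Lemma in_QchiV chi a : in_Qchi chi a -> in_Qchi chi a^-1.
Proof. by move=> /in_QchiP Qa; apply/in_QchiP => S S_chi; rewrite rpredV Qa. Qed.

Lemma in_Qchi_trans chi psi a :
  (forall g, in_Qchi psi (chi g)) -> in_Qchi chi a -> in_Qchi psi a.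
Proof. by move=> Qpsi_chi Qa S S_closed S_psi; apply: Qa => // g; apply: Qpsi_chi. Qed.

Lemma in_Qchi_rmorph (u : {rmorphism algC -> algC}) chi psi a :
  (forall g, u (chi g) = psi g) -> in_Qchi chi a -> in_Qchi psi (u a).
Proof.
move=> u_chi Qa; apply/in_QchiP => S S_psi.
have: a \in [pred c | u c \in S].
  by apply: Qa (rmorph_preim_divring_closed u S) _ => g; rewrite inE u_chi.
by rewrite inE.
Qed.

Lemma in_Qchi_rmorph_fix (f : {rmorphism algC -> algC}) chi a :
  (forall g, f (chi g) = chi g) -> in_Qchi chi a -> f a = a.
Proof.
move=> f_chi Qa; have: a \in [pred c | f c == c].
  by apply: Qa (rmorph_fix_divring_closed f) _ => g; rewrite inE f_chi.
by rewrite inE => /eqP.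
Qed.

Lemma in_Qchi_morph_inj chi (sigma : algC -> algC) :
  sigma 1 = 1 ->
  (forall a b, in_Qchi chi a -> in_Qchi chi b -> sigma (a + b) = sigma a + sigma b) ->
  (forall a b, in_Qchi chi a -> in_Qchi chi b -> sigma (a * b) = sigma a * sigma b) ->
  forall a b, in_Qchi chi a -> in_Qchi chi b -> sigma a = sigma b -> a = b.
Proof.
move=> sigma1 sigmaD sigmaM a b Qa Qb sigma_ab; apply/eqP; rewrite -subr_eq0.
apply/negP => /negP nz_ab; have Qab := in_QchiB Qa Qb.
have sigma_ab0 : sigma (a - b) = 0.
  by apply: (addIr (sigma b)); rewrite add0r -sigmaD // subrK sigma_ab.
have := sigmaM _ _ Qab (in_QchiV Qab).
by rewrite mulfV // sigma1 sigma_ab0 mul0r => /eqP; rewrite oner_eq0.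
Qed.

Lemma galois_conj_cfker chi psi : galois_conj chi psi -> cfker chi = cfker psi.
Proof.
case=> _ [sigma [sigma1 [sigmaD sigmaM _ _ sigma_chi]]].
have sigma_inj := in_Qchi_morph_inj sigma1 sigmaD sigmaM.
apply/setP=> x; rewrite !inE; congr (_ && _); apply: eq_forallb => y.
rewrite -!sigma_chi; apply/eqP/eqP => [-> //|].
move=> sigma_xy; apply: sigma_inj sigma_xy; exact: in_Qchi_cfun.
Qed.

Lemma galois_conj_rmorph (u v : {rmorphism algC -> algC}) chi psi :
  (forall g, u (chi g) = psi g) -> (forall g, v (psi g) = chi g) ->
  (forall a, in_Qchi chi a <-> in_Qchi psi a) -> galois_conj chi psi.
Proof.
move=> u_chi v_psi Qchi_psi; split=> //; exists u; split; first exact: rmorph1.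
split=> [a b _ _ | a b _ _ | a Qa | b Qb | //].
- exact: rmorphD.
- exact: rmorphM.
- by apply/Qchi_psi; apply: in_Qchi_rmorph u_chi Qa.
- exists (v b); first by apply: in_Qchi_rmorph v_psi _; apply/Qchi_psi.
  apply: (@in_Qchi_rmorph_fix (u \o v)) (proj1 (Qchi_psi b) Qb) => g /=.
  by rewrite v_psi.
Qed.

End FieldOfValues.

Lemma prim_root_of_order_dvd (R : nzRingType) n (z : R) :
  (0 < n)%N -> (forall d, (z ^+ d == 1) = (n %| d)%N) -> n.-primitive_root z.
Proof.
move=> n_gt0 z_dvd; rewrite /primitive_root_of_unity n_gt0; apply/forallP => k.
rewrite unity_rootE z_dvd; apply/eqP; apply/idP/idP => [n_k | /eqP-> //].
by rewrite eqn_leq ltn_ord dvdn_leq.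
Qed.

Section LinearCharacters.
Variables (gT : finGroupType) (Z : {group gT}).
Implicit Types lam mu : 'CF(Z).

Lemma lin_char_cfcenter lam : lam \is a linear_char -> 'Z(lam)%CF = Z.
Proof.
move=> Llam; apply/eqP; rewrite eqEsubset cfcenter_sub; apply/subsetP => z Zz.
by rewrite char_cfcenterE ?lin_charW // normC_lin_char ?lin_char1.
Qed.

Lemma lin_char_coset_expg lam y z j :
    lam \is a linear_char -> y \in Z -> z \in Z ->
  coset (cfker lam) z = (coset (cfker lam) y ^+ j)%g -> lam z = lam y ^+ j.
Proof.
move=> Llam Zy Zz zyj; have nKZ := cfker_normal lam.
rewrite -lin_charX // -(cfQuoE nKZ) // -[RHS](cfQuoE nKZ) ?groupX //.
by rewrite zyj morphX // (subsetP (normal_norm nKZ)).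
Qed.

Lemma lin_char_prim_root lam y :
  lam \is a linear_char -> y \in Z -> #[coset (cfker lam) y].-primitive_root (lam y).
Proof.
move=> Llam Zy; apply: prim_root_of_order_dvd (order_gt0 _) _ => d.
have Zyd : (y ^+ d)%g \in Z by rewrite groupX.
have NKyd : (y ^+ d)%g \in 'N(cfker lam) by rewrite (subsetP (cfker_norm lam)).
rewrite -lin_charX // order_dvdn -morphX ?(subsetP (cfker_norm lam)) //.
have -> : (lam (y ^+ d)%g == 1) = ((y ^+ d)%g \in cfker lam).
  by rewrite cfkerEchar ?lin_charW // inE Zyd lin_char1.
by apply/idP/eqP => [/coset_id | /(coset_idr NKyd)].
Qed.

Lemma lin_char_eq_cfker_expr lam mu :
    lam \is a linear_char -> mu \is a linear_char -> cfker lam = cfker mu ->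
  exists n k, [/\ coprime k n, {in Z, forall z, lam z ^+ n = 1}
                & {in Z, forall z, mu z = lam z ^+ k}].
Proof.
move=> Llam Lmu ker_lam_mu; set K := cfker lam.
have /cyclicP[x defZK] : cyclic (Z / K).
  by rewrite -{1}(lin_char_cfcenter Llam); apply: cfcenter_cyclic.
have /morphimP[y _ Zy def_x] : x \in (Z / K)%g by rewrite defZK cycle_id.
have {}def_x : x = coset K y by [].
have coset_expg z : z \in Z -> exists j, coset K z = (coset K y ^+ j)%g.
  by move=> Zz; apply/cycleP; rewrite -def_x -defZK mem_quotient.
have lam_y := lin_char_prim_root Llam Zy.
have mu_y : #[coset K y].-primitive_root (mu y).
  by rewrite /K ker_lam_mu lin_char_prim_root.
have [k mu_y_k] := prim_rootP lam_y (prim_expr_order mu_y).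
exists #[coset K y]%g, k; split.
- by rewrite -(prim_root_exp_coprime k lam_y) -mu_y_k.
- move=> z Zz; have [j /(lin_char_coset_expg Llam Zy Zz)->] := coset_expg z Zz.
  by rewrite -exprM mulnC exprM (prim_expr_order lam_y) expr1n.
move=> z Zz; have [j zyj] := coset_expg z Zz.
rewrite (lin_char_coset_expg Llam Zy Zz zyj).
rewrite (lin_char_coset_expg (j := j) Lmu Zy Zz) -?ker_lam_mu // mu_y_k.
by rewrite -!exprM mulnC.
Qed.

Lemma lin_char_eq_cfker_rmorph lam mu :
    lam \is a linear_char -> mu \is a linear_char -> cfker lam = cfker mu ->
  exists u : {rmorphism algC -> algC}, forall z, u (lam z) = mu z.
Proof.
move=> Llam Lmu ker_lam_mu.
have [n [k [coprime_kn lam_n mu_k]]] := lin_char_eq_cfker_expr Llam Lmu ker_lam_mu.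
have [u u_k] := Qn_aut_exists coprime_kn; exists u => z.
have [Zz | notZz] := boolP (z \in Z); last by rewrite !cfun0 ?rmorph0.
by rewrite u_k ?lam_n ?mu_k.
Qed.

Lemma lin_char_eq_cfker_values lam mu :
    lam \is a linear_char -> mu \is a linear_char -> cfker lam = cfker mu ->
  forall z, exists w, mu z = lam w.
Proof.
move=> Llam Lmu ker_lam_mu z.
have [n [k [_ _ mu_k]]] := lin_char_eq_cfker_expr Llam Lmu ker_lam_mu.
have [Zz | notZz] := boolP (z \in Z); last by exists z; rewrite !cfun0.
by exists (z ^+ k)%g; rewrite mu_k ?lin_charX.
Qed.

End LinearCharacters.

Section GVZ.
Variables (gT : finGroupType) (G : {group gT}).

Lemma cfcenter_Res_lin (Z : {group gT}) (chi : 'CF(G)) :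
  Z \subset 'Z(chi)%CF ->
  exists2 lam : 'CF(Z), lam \is a linear_char & 'Res[Z] chi = chi 1%g *: lam.
Proof.
move=> sZZchi; have [lam Llam Res_lam] := cfcenter_Res chi.
exists ('Res[Z] lam); first exact: cfRes_lin_char.
by rewrite -(cfResRes _ sZZchi (cfcenter_sub chi)) Res_lam linearZ.
Qed.

Lemma cfcenter_eq_cfker (i j : Iirr G) :
  cfker 'chi_i = cfker 'chi_j -> 'Z('chi_i)%CF = 'Z('chi_j)%CF.
Proof.
move=> ker_ij; have nKZi := cfker_center_normal 'chi_i.
have nKZj : cfker 'chi_i <| 'Z('chi_j)%CF by rewrite ker_ij cfker_center_normal.
apply: (quotient_inj nKZi nKZj).
by have := cfcenter_eq_center j; rewrite -ker_ij => ->; apply: cfcenter_eq_center.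
Qed.

Lemma gvz_irr_lin (Z : {group gT}) (i : Iirr G) :
    GVZ G -> 'Z('chi_i)%CF = Z ->
  exists lam : 'CF(Z), [/\ lam \is a linear_char, cfker lam = cfker 'chi_i
                         & forall g, 'chi_i g = 'chi_i 1%g * lam g].
Proof.
move=> gvzG defZ; have sZG : Z \subset G by rewrite -defZ cfcenter_sub.
have sZZi : Z \subset 'Z('chi_i)%CF by rewrite defZ.
have [lam Llam Res_chi] := cfcenter_Res_lin (Z := Z) (chi := 'chi_i) sZZi.
exists lam; split=> //.
  rewrite -(cfker_scale_nz _ (irr1_neq0 i)) -Res_chi cfker_Res ?irr_char //.
  by apply/setIidPr; rewrite -defZ; apply: normal_sub (cfker_center_normal _).
move=> g; have [Zg | notZg] := boolP (g \in Z).
  by rewrite -(cfResE _ sZG Zg) Res_chi cfunE.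
rewrite [lam g]cfun0 // mulr0; have [Gg | notGg] := boolP (g \in G); last exact: cfun0.
by apply: gvzG; rewrite inE defZ notZg.
Qed.

Lemma gvz_irr_eq_cfker_lin (i j : Iirr G) :
    GVZ G -> 'chi_i 1%g = 'chi_j 1%g -> cfker 'chi_i = cfker 'chi_j ->
  exists (Z : {group gT}) (lam mu : 'CF(Z)),
    [/\ lam \is a linear_char, mu \is a linear_char, cfker lam = cfker mu,
        forall g, 'chi_i g = 'chi_i 1%g * lam g
      & forall g, 'chi_j g = 'chi_i 1%g * mu g].
Proof.
move=> gvzG chi1_ij ker_ij.
have [lam [Llam ker_lam chi_lam]] := gvz_irr_lin gvzG (erefl 'Z('chi_i)%CF).
have [mu [Lmu ker_mu chi_mu]] := gvz_irr_lin gvzG (esym (cfcenter_eq_cfker ker_ij)).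
exists 'Z('chi_i)%CF, lam, mu; split=> // [|g]; first by rewrite ker_lam ker_mu.
by rewrite chi1_ij.
Qed.

Lemma gvz_irr_galois_conj (i j : Iirr G) :
    GVZ G -> 'chi_i 1%g = 'chi_j 1%g -> cfker 'chi_i = cfker 'chi_j ->
  galois_conj 'chi_i 'chi_j.
Proof.
move=> gvzG chi1_ij ker_ij.
have [Z [lam [mu [Llam Lmu ker_lam_mu chi_lam chi_mu]]]] :=
  gvz_irr_eq_cfker_lin gvzG chi1_ij ker_ij.
have [u u_lam] := lin_char_eq_cfker_rmorph Llam Lmu ker_lam_mu.
have [v v_mu] := lin_char_eq_cfker_rmorph Lmu Llam (esym ker_lam_mu).
have fix_chi1 (f : {rmorphism algC -> algC}) : f ('chi_i 1%g) = 'chi_i 1%g.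
  by rewrite irr1_degree rmorph_nat.
apply: (galois_conj_rmorph (u := u) (v := v)) => [g | g | a].
- by rewrite chi_lam chi_mu rmorphM fix_chi1 u_lam.
- by rewrite chi_lam chi_mu rmorphM fix_chi1 v_mu.
split; apply: in_Qchi_trans => g.
  have [w lam_w] := lin_char_eq_cfker_values Lmu Llam (esym ker_lam_mu) g.
  by rewrite chi_lam lam_w -chi_mu; apply: in_Qchi_cfun.
have [w mu_w] := lin_char_eq_cfker_values Llam Lmu ker_lam_mu g.
by rewrite chi_mu mu_w -chi_lam; apply: in_Qchi_cfun.
Qed.

End GVZ.

Theorem lemma3p2 (gT : finGroupType) (G : {group gT}) (p : nat) (n : nat)
  (delta : nat -> nat) :
  prime p ->
  GVZ G -> nested G ->
  delta 0%N = 0%N ->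
  (forall k : nat, (k < n)%N -> (delta k < delta k.+1)%N) ->
  (forall i : Iirr G, exists2 k : nat, (k <= n)%N & 'chi[G]_i 1%g = (p ^ delta k)%:R) ->
  (forall k : nat, (k <= n)%N -> exists i : Iirr G, 'chi[G]_i 1%g = (p ^ delta k)%:R) ->
  forall (r : nat), (1 <= r <= n)%N ->
  forall i j : Iirr G,
    'chi[G]_i 1%g = (p ^ delta r)%:R -> 'chi[G]_j 1%g = (p ^ delta r)%:R ->
    (galois_conj 'chi[G]_i 'chi[G]_j <-> cfker 'chi[G]_i = cfker 'chi[G]_j).
Proof.
move=> _ gvzG _ _ _ _ _ r _ i j chi_i1 chi_j1.
split; first exact: galois_conj_cfker.
by apply: gvz_irr_galois_conj; rewrite // chi_i1 chi_j1.
Qed.
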